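(* Let $\delta\ge0$, $R,S\ge1$ and $i_1\in\{1,2,3,4\}$. Then $$\#\big\{\mathbf{x}\in\mathbb{Z}^2_{\mathrm{prim}}:\ \textstyle\prod_iL_i(\mathbf{x})\ne0,\ S\le|\mathbf{x}|<2S,\ R\le|L_{i_1}(\mathbf{x})|<2R,\ \Delta_{\mathrm{bad}}(\mathbf{x})>(SR)^\delta\big\}\ll(SR)^{1-\delta/8},$$ with implied constant depending only on $L_1,\dots,L_4$.
   Context: $L_1,\dots,L_4\in\mathbb{Z}[x_1,x_2]$ are pairwise non-proportional linear forms with coprime coefficients; $|\cdot|$ is the sup norm. For $\mathbf{x}$ with $\prod_iL_i(\mathbf{x})\ne0$, $\Delta_{\mathrm{bad}}(\mathbf{x})=\prod_{p^e\,\|\,L_1(\mathbf{x})\cdots L_4(\mathbf{x}),\ e\ge2}p^e$, the square-full part of $L_1(\mathbf{x})\cdots L_4(\mathbf{x})$. *)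

From HB Require Import structures.
From mathcomp Require Import all_boot all_order all_algebra.
From mathcomp Require Import all_classical all_reals.
From mathcomp Require Import exp.
Set Implicit Arguments. Unset Strict Implicit. Unset Printing Implicit Defensive.
Import Order.TTheory GRing.Theory Num.Theory.
Local Open Scope ring_scope.

Definition linf (a b : 'I_4 -> int) (i : 'I_4) (x : int * int) : int :=
  a i * x.1 + b i * x.2.

Definition prodL (a b : 'I_4 -> int) (x : int * int) : int :=
  \prod_(i < 4) linf a b i x.

Definition supn (x : int * int) : int := Num.max `|x.1| `|x.2|.

Definition sqfull_part (n : nat) : nat :=
  (\prod_(p <- primes n | 1 < logn p n) p ^ logn p n)%N.

Definition Delta_bad (a b : 'I_4 -> int) (x : int * int) : nat :=
  sqfull_part `|prodL a b x|%N.

Definition counted (R : realType) (a b : 'I_4 -> int) (delta S Rr : R)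
    (i1 : 'I_4) (x : int * int) : Prop :=
  [/\ gcdz x.1 x.2 = 1%N,
      prodL a b x != 0,
      S <= (supn x)%:~R < 2 * S,
      Rr <= (`|linf a b i1 x|)%:~R < 2 * Rr
    & (S * Rr) `^ delta < (Delta_bad a b x)%:R].

From HB Require Import structures.
From mathcomp Require Import all_boot all_order all_algebra.
From mathcomp Require Import all_classical all_reals.
From mathcomp Require Import exp.
From mathcomp Require Import zify ring lra.
Import Order.TTheory GRing.Theory Num.Theory.
Set Implicit Arguments. Unset Strict Implicit. Unset Printing Implicit Defensive.

(* For primitive x, a common divisor of L_i(x) and L_j(x) divides the resultant
   a_i b_j - a_j b_i.  Hence Delta_bad(x) divides D^8 prod_i sqfull(L_i(x)), D
   the product of all resultants, and Delta_bad(x) > (SR)^delta forces some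
   L_i(x) to be divisible by a square-full d = al^2 be^3 > y^2, where
   y = (SR)^(delta/8) / D^4.  For fixed i and d the point x is determined by
   (L_i(x)/d, L_j(x)) for some j != i with one of L_i, L_j bounded by 2R and the
   other by O(S), so there are O(SR/d) such x; finally the sum of 1/(al^2 be^3)
   over al^2 be^3 > y^2 is O(1/y). *)

Lemma dvdn_from_logn m n : 0 < m -> 0 < n ->
  (forall p, prime p -> logn p m <= logn p n) -> m %| n.
Proof.
move=> m0 n0 le_mn; apply/(dvdn_partP _ m0) => p.
by rewrite mem_primes => /and3P[pp _ _]; rewrite p_part pfactor_dvdn // le_mn.
Qed.

Lemma logn_prod p I (r : seq I) (F : I -> nat) : (forall i, 0 < F i) ->
  logn p (\prod_(i <- r) F i) = \sum_(i <- r) logn p (F i).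
Proof.
move=> F_gt0; elim: r => [|i r IHr]; first by rewrite !big_nil logn1.
by rewrite !big_cons lognM ?IHr ?prodn_gt0.
Qed.

Lemma logn_prod_primes p (r : seq nat) (P : pred nat) e : prime p -> uniq r ->
  all prime r ->
  logn p (\prod_(q <- r | P q) q ^ e q) = if (p \in r) && P p then e p else 0.
Proof.
move=> pp; elim: r => [|q r IHr] /=; first by rewrite big_nil logn1.
move=> /andP[qNr r_uniq] /andP[q_pr r_pr].
have {IHr}: logn p (\prod_(q <- r | P q) q ^ e q) = if (p \in r) && P p then e p else 0.
  exact: IHr.
have : 0 < \prod_(q <- r | P q) q ^ e q.
  rewrite big_seq_cond; apply: prodn_cond_gt0 => i /andP[ir _].
  by rewrite expn_gt0 prime_gt0 //; apply: (allP r_pr).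
have logn_q : logn p (q ^ e q) = if p == q then e q else 0.
  by rewrite lognX logn_prime //; case: eqP; rewrite ?muln1 ?muln0.
rewrite big_cons in_cons; set pr := \prod_(_ <- r | _) _ => pr_gt0 IHr.
rewrite (fun_if (logn p)) lognM ?pr_gt0 ?expn_gt0 ?prime_gt0 // IHr logn_q.
by case: (eqVneq p q) => [->|_]; case: (P q); rewrite ?(negPf qNr) ?andbF ?addn0.
Qed.

Definition sqfull_exp (e : nat) : nat := if 1 < e then e else 0.

Lemma sqfull_expD_le m n : sqfull_exp (m + n) <= sqfull_exp m + 2 * n.
Proof. by rewrite /sqfull_exp; case: ifP; case: ifP; lia. Qed.

Lemma sqfull_exp_sum_le (I : finType) (v : I -> nat) d :
  (forall i j, i != j -> minn (v i) (v j) <= d) ->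
  sqfull_exp (\sum_i v i) <= 2 * #|I| * d + \sum_i sqfull_exp (v i).
Proof.
move=> min_le.
have sum_le (P : pred I) : (forall i, P i -> v i <= d) -> \sum_(i | P i) v i <= #|I| * d.
  move=> le_vd; apply: (@leq_trans (\sum_(i | P i) d)); first exact: leq_sum.
  by rewrite sum_nat_const leq_mul2r max_card orbT.
have [k dk | all_le] := pickP (fun i => d < v i); last first.
  have : \sum_i v i <= #|I| * d by apply: sum_le => i _; rewrite leqNgt all_le.
  by rewrite /sqfull_exp; case: ifP => _; lia.
have le_other i : i != k -> v i <= d.
  by move=> ik; have := min_le i k ik; rewrite geq_min [v k <= d]leqNgt dk orbF.
have rest_le : \sum_(i | i != k) v i <= #|I| * d by apply: sum_le.
rewrite (bigD1 k) //= [X in _ <= _ + X](bigD1 k) //=.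
apply: leq_trans (sqfull_expD_le _ _) _.
by rewrite addnCA leq_add2l -mulnA (leq_trans _ (leq_addr _ _)) // leq_mul2l rest_le orbT.
Qed.

Lemma sqfull_part_gt0 n : 0 < sqfull_part n.
Proof.
rewrite /sqfull_part big_seq_cond; apply: prodn_cond_gt0 => p /andP[].
by rewrite mem_primes => /and3P[pp _ _] _; rewrite expn_gt0 prime_gt0.
Qed.

Lemma logn_sqfull_part p n : prime p -> 0 < n ->
  logn p (sqfull_part n) = sqfull_exp (logn p n).
Proof.
move=> pp n0; rewrite /sqfull_part logn_prod_primes ?primes_uniq //; last first.
  by apply/allP => q; rewrite mem_primes => /and3P[].
rewrite mem_primes pp n0 /= /sqfull_exp.
have [_|lt1] := leqP (logn p n) 1; rewrite ?andbF ?andbT //.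
by rewrite -[p in p %| _]expn1 pfactor_dvdn // ltnW.
Qed.

Lemma sqfull_part_dvdn n : 0 < n -> sqfull_part n %| n.
Proof.
move=> n0; apply: dvdn_from_logn => // [|p pp]; first exact: sqfull_part_gt0.
by rewrite logn_sqfull_part // /sqfull_exp; case: ifP.
Qed.

(* Split each exponent [e >= 2] as [e = 2 * ((e - 3 * (e %% 2)) %/ 2) + 3 * (e %% 2)]. *)
Lemma sqfull_part_sqr_cube n :
  exists al be, [/\ 0 < al, 0 < be & sqfull_part n = al ^ 2 * be ^ 3].
Proof.
pose P p := 1 < logn p n.
pose al := \prod_(p <- primes n | P p) p ^ ((logn p n - 3 * (logn p n %% 2)) %/ 2).
pose be := \prod_(p <- primes n | P p) p ^ (logn p n %% 2).
have prod_gt0 e : 0 < \prod_(p <- primes n | P p) p ^ e p.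
  rewrite big_seq_cond; apply: prodn_cond_gt0 => p /andP[].
  by rewrite mem_primes => /and3P[pp _ _] _; rewrite expn_gt0 prime_gt0.
exists al, be; split; rewrite ?prod_gt0 //.
have prodX k e : (\prod_(p <- primes n | P p) p ^ e p) ^ k =
                 \prod_(p <- primes n | P p) (p ^ e p) ^ k.
  exact: (big_morph (fun m => m ^ k) (fun m1 m2 => expnMn m1 m2 k) (exp1n k)).
rewrite /sqfull_part /al /be !prodX -big_split /=.
apply: eq_bigr => p Pp; rewrite -!expnM -expnD; congr (_ ^ _); move: Pp; rewrite /P; lia.
Qed.

Lemma sqfull_part_prod_dvdn (I : finType) (n : I -> nat) D :
  0 < D -> (forall i, 0 < n i) -> (forall i j, i != j -> gcdn (n i) (n j) %| D) ->
  sqfull_part (\prod_i n i) %| D ^ (2 * #|I|) * \prod_i sqfull_part (n i).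
Proof.
move=> D0 n0 gcd_dvd.
have sq_gt0 : 0 < \prod_i sqfull_part (n i).
  by apply: prodn_gt0 => i; apply: sqfull_part_gt0.
apply: dvdn_from_logn => [||p pp]; rewrite ?sqfull_part_gt0 ?muln_gt0 ?expn_gt0 ?D0 //.
rewrite logn_sqfull_part ?prodn_gt0 // lognM ?expn_gt0 ?D0 // lognX !logn_prod //;
  last by move=> i; apply: sqfull_part_gt0.
under [X in _ <= _ + X]eq_bigr => i _ do rewrite logn_sqfull_part //.
apply: sqfull_exp_sum_le => i j ij.
by rewrite -logn_gcd // dvdn_leq_log // gcd_dvd.
Qed.

Lemma size_le_sum_count (T : eqType) (I : finType) (P : I -> pred T) (s : seq T) :
  (forall x, x \in s -> exists t, P t x) -> size s <= \sum_t count (P t) s.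
Proof.
elim: s => [|x s IHs] covered; first by rewrite big1.
have [t Ptx] := covered x (mem_head _ _).
rewrite /= (eq_bigr (fun t => P t x + count (P t) s)) // big_split /=.
have one_le : 1 <= \sum_t P t x by rewrite (bigD1 t) //= Ptx.
have : size s <= \sum_t count (P t) s.
  by apply: IHs => y ys; apply: covered; rewrite in_cons ys orbT.
lia.
Qed.

Definition int_range (n : nat) : seq int :=
  [seq (k%:Z - n%:Z)%R | k <- iota 0 (2 * n + 1)].

Lemma mem_int_range (u : int) n : `|u| <= n -> u \in int_range n.
Proof.
move=> u_le; apply/mapP; exists `|(u + n%:Z)%R|; rewrite ?mem_iota; lia.
Qed.

Lemma size_box_le (s : seq (int * int)) X Y : uniq s ->
  (forall z, z \in s -> `|z.1| <= X /\ `|z.2| <= Y) ->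
  size s <= (2 * X + 1) * (2 * Y + 1).
Proof.
move=> s_uniq s_box.
have -> : (2 * X + 1) * (2 * Y + 1) =
          size [seq (u, v) | u <- int_range X, v <- int_range Y].
  by rewrite size_allpairs !size_map !size_iota.
apply: uniq_leq_size => // -[u v] /s_box [u_le v_le].
by apply: allpairs_f; apply: mem_int_range.
Qed.

(* The points with [d | f x] map injectively to the box [|u| <= X / d], [|v| <= Y]
   via [x |-> (f x / d, g x)]. *)
Lemma size_filter_dvdz_le (T : eqType) (s : seq T) (f g : T -> int) (d X Y : nat) :
  uniq s -> {in s &, injective (fun x => (f x, g x))} -> 0 < d -> 0 < Y ->
  (forall x, x \in s -> [/\ `|f x| <= X, `|g x| <= Y & f x != 0%R]) ->
  size [seq x <- s | (d%:Z %| f x)%Z] * d <= 9 * X * Y.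
Proof.
move=> s_uniq fg_inj d_gt0 Y_gt0 s_bounds.
have [X_lt_d | d_le_X] := ltnP X d.
  suff -> : [seq x <- s | (d%:Z %| f x)%Z] = [::] by [].
  apply/eqP; rewrite -[_ == _]negbK -has_filter; apply/hasPn => x xs.
  have [fx_le _ fx_neq0] := s_bounds x xs.
  apply/negP => /dvdzP [q fx_eq]; move: fx_le fx_neq0; rewrite fx_eq abszM absz_nat.
  rewrite mulf_eq0 negb_or -absz_gt0 => fx_le /andP[q_gt0 _]; nia.
pose h x := ((f x %/ d%:Z)%Z, g x).
have size_le : size [seq x <- s | (d%:Z %| f x)%Z] <= (2 * (X %/ d) + 1) * (2 * Y + 1).
  rewrite -(size_map h); apply: size_box_le.
    rewrite map_inj_in_uniq ?filter_uniq // => x y.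
    rewrite !mem_filter => /andP[dx xs] /andP[dy ys] [fxy gxy].
    by apply: fg_inj => //=; rewrite -(divzK dx) -(divzK dy) fxy gxy.
  move=> z /mapP [x]; rewrite mem_filter => /andP[dx xs] ->{z} /=.
  have [fx_le gx_le _] := s_bounds x xs; split=> //.
  by rewrite leq_divRL //; move: fx_le; rewrite -{1}(divzK dx) abszM absz_nat.
have q_ge1 : 1 <= X %/ d by rewrite leq_divRL // mul1n.
have := leq_divM X d; nia.
Qed.

Local Open Scope ring_scope.

Lemma det_mul_fst (a1 b1 a2 b2 x1 x2 : int) :
  (a1 * b2 - a2 * b1) * x1 = b2 * (a1 * x1 + b1 * x2) - b1 * (a2 * x1 + b2 * x2).
Proof. ring. Qed.

Lemma det_mul_snd (a1 b1 a2 b2 x1 x2 : int) :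
  (a1 * b2 - a2 * b1) * x2 = a1 * (a2 * x1 + b2 * x2) - a2 * (a1 * x1 + b1 * x2).
Proof. ring. Qed.

Lemma dvdz_det_primitive (a1 b1 a2 b2 d : int) (x : int * int) : gcdz x.1 x.2 = 1%N ->
  (d %| a1 * x.1 + b1 * x.2)%Z -> (d %| a2 * x.1 + b2 * x.2)%Z ->
  (d %| a1 * b2 - a2 * b1)%Z.
Proof.
move=> x_prim d_L1 d_L2; have [u [v uv]] := Bezoutz x.1 x.2.
have -> : a1 * b2 - a2 * b1 =
          u * ((a1 * b2 - a2 * b1) * x.1) + v * ((a1 * b2 - a2 * b1) * x.2).
  by rewrite mulrCA [v * _]mulrCA -mulrDr uv x_prim mulr1.
rewrite (det_mul_fst _ _ _ _ _ x.2) (det_mul_snd _ _ _ _ x.1).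
by rewrite rpredD ?dvdz_mull // rpredB ?dvdz_mull.
Qed.

Lemma linear_pair_inj (a1 b1 a2 b2 : int) (x y : int * int) : a1 * b2 - a2 * b1 != 0 ->
  a1 * x.1 + b1 * x.2 = a1 * y.1 + b1 * y.2 ->
  a2 * x.1 + b2 * x.2 = a2 * y.1 + b2 * y.2 -> x = y.
Proof.
move=> det_neq0 eq1 eq2; case: x y eq1 eq2 => [x1 x2] [y1 y2] /= eq1 eq2.
congr (_, _); apply: (mulfI det_neq0).
  by rewrite (det_mul_fst _ _ _ _ _ x2) (det_mul_fst _ _ _ _ _ y2) eq1 eq2.
by rewrite (det_mul_snd _ _ _ _ x1) (det_mul_snd _ _ _ _ y1) eq1 eq2.
Qed.

Section LinearForms.
Variables a b : 'I_4 -> int.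
Hypothesis det_neq0 : forall i j : 'I_4, i != j -> a i * b j - a j * b i != 0.

Definition det_prod : nat :=
  (\prod_(i < 4) \prod_(j < 4 | i != j) `|(a i * b j - a j * b i)%R|)%N.

Lemma det_prod_gt0 : (0 < det_prod)%N.
Proof.
apply: prodn_gt0 => i; apply: prodn_cond_gt0 => j ij.
by rewrite absz_gt0 det_neq0.
Qed.

Lemma dvdn_det_prod i j : i != j -> (`|(a i * b j - a j * b i)%R| %| det_prod)%N.
Proof.
move=> ij; rewrite /det_prod (bigD1 i) //= dvdn_mulr //.
by rewrite (bigD1 j) //= dvdn_mulr.
Qed.

Lemma linf_neq0 x i : prodL a b x != 0 -> linf a b i x != 0.
Proof. by move/prodf_neq0; apply. Qed.

Lemma gcdn_linf_dvdn x i j : gcdz x.1 x.2 = 1%N -> i != j ->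
  (gcdn `|linf a b i x| `|linf a b j x| %| det_prod)%N.
Proof.
move=> x_prim ij; apply: dvdn_trans (dvdn_det_prod ij).
rewrite -[gcdn _ _]absz_nat -dvdzE.
apply: dvdz_det_primitive x_prim _ _; rewrite dvdzE absz_nat.
  exact: dvdn_gcdl.
exact: dvdn_gcdr.
Qed.

Lemma Delta_bad_dvdn x : gcdz x.1 x.2 = 1%N -> prodL a b x != 0 ->
  (Delta_bad a b x %| det_prod ^ 8 * \prod_i sqfull_part `|linf a b i x|)%N.
Proof.
move=> x_prim x_nz.
have -> : 8%N = (2 * #|'I_4|)%N by rewrite card_ord.
rewrite /Delta_bad /prodL (big_morph _ abszM absz1).
apply: sqfull_part_prod_dvdn => [||i j]; rewrite ?det_prod_gt0 //.
  by move=> i; rewrite absz_gt0 linf_neq0.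
exact: gcdn_linf_dvdn.
Qed.

Lemma Delta_bad_le x : gcdz x.1 x.2 = 1%N -> prodL a b x != 0 ->
  (Delta_bad a b x <= det_prod ^ 8 * \prod_i sqfull_part `|linf a b i x|)%N.
Proof.
move=> x_prim x_nz; apply: dvdn_leq (Delta_bad_dvdn x_prim x_nz).
rewrite muln_gt0 expn_gt0 det_prod_gt0 //.
by apply: prodn_gt0 => i; apply: sqfull_part_gt0.
Qed.

Lemma linf_pair_inj i j : i != j -> injective (fun x => (linf a b i x, linf a b j x)).
Proof. by move=> ij x y [Li Lj]; apply: linear_pair_inj (det_neq0 ij) Li Lj. Qed.

Definition coef_bound : nat := (1 + \sum_i (`|a i| + `|b i|))%N.

Lemma supn_ge0 x : 0 <= supn x.
Proof. by rewrite /supn le_max normr_ge0. Qed.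

Lemma linf_le x k : (`|linf a b k x| <= coef_bound * `|supn x|)%N.
Proof.
have ab_le : (`|a k| + `|b k| <= coef_bound)%N by rewrite /coef_bound (bigD1 k) //=; lia.
rewrite -lez_nat PoszM !abszE (ger0_norm (supn_ge0 x)).
apply: le_trans (ler_normD _ _) _; rewrite !normrM.
have x1_le : `|x.1| <= supn x by rewrite /supn le_max lexx.
have x2_le : `|x.2| <= supn x by rewrite /supn le_max lexx orbT.
have ab_le' : `|a k| + `|b k| <= coef_bound%:Z by rewrite -!abszE -PoszD lez_nat.
apply: le_trans (_ : (`|a k| + `|b k|) * supn x <= _); last first.
  by rewrite ler_wpM2r ?supn_ge0.
by rewrite mulrDl lerD // ler_wpM2l.
Qed.
End LinearForms.

Section SquarefullReciprocals.
Variable R : realType.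

Lemma sum_telescope_le (F g : nat -> R) m N :
  (forall a, (m <= a)%N -> F a <= g a - g a.+1) ->
  (forall a, (m <= a)%N -> 0 <= g a) ->
  \sum_(m <= a < N) F a <= g m.
Proof.
move=> F_le g_ge0; have [mN|Nm] := leqP m N; last by rewrite big_geq ?(ltnW Nm) // g_ge0.
apply: le_trans (_ : \sum_(m <= a < N) (g a - g a.+1) <= _).
  by apply: ler_sum_nat => a /andP[ma _]; apply: F_le.
have -> : \sum_(m <= a < N) (g a - g a.+1) = g m - g N.
  by rewrite -opprB -telescope_sumr // -sumrN; apply: eq_bigr => a _; rewrite opprB.
by rewrite gerBl g_ge0.
Qed.

Lemma inv_sqr_le_telescope a : (0 < a)%N ->
  (a%:R ^+ 2)^-1 <= 2 / (2 * a%:R - 1) - 2 / (2 * a.+1%:R - 1) :> R.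
Proof.
move=> a_gt0; have a_ge1 : 1 <= a%:R :> R by rewrite ler1n.
rewrite -[a.+1%:R]natr1; set t := a%:R in a_ge1 *.
have h1 : 0 < 2 * t - 1 by lra.
have h2 : 0 < 2 * (t + 1) - 1 by lra.
rewrite -subr_ge0.
have -> : 2 / (2 * t - 1) - 2 / (2 * (t + 1) - 1) - (t ^+ 2)^-1 =
          1 / ((2 * t - 1) * (2 * (t + 1) - 1) * t ^+ 2).
  by field; rewrite (gt_eqF h1) (gt_eqF h2) /=; lra.
by rewrite divr_ge0 // !mulr_ge0 ?sqr_ge0 // ltW.
Qed.

Lemma sum_inv_sqr_gt (z : R) N : 0 < z ->
  \sum_(a < N | z < a%:R) (a%:R ^+ 2)^-1 <= 2 / z.
Proof.
move=> z_gt0; pose m := (Num.truncn z).+1.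
have -> : \sum_(a < N | z < a%:R) (a%:R ^+ 2)^-1 = \sum_(m <= a < N) (a%:R ^+ 2)^-1 :> R.
  by rewrite big_geq_mkord; apply: eq_bigl => a; rewrite -truncn_lt_nat ?ltW.
apply: le_trans (@sum_telescope_le _ (fun a => 2 / (2 * a%:R - 1)) m N _ _) _.
- by move=> a ma; apply: inv_sqr_le_telescope; apply: leq_trans ma.
- by move=> a ma; rewrite divr_ge0 // subr_ge0 -natrM ler1n; lia.
have z_lt_m : z < m%:R by rewrite -truncn_lt_nat ?ltW.
have m_ge1 : 1 <= m%:R :> R by rewrite ler1n.
rewrite ler_pM2l // lef_pV2 ?posrE //; lra.
Qed.

Lemma inv_pow3half_le_telescope b : (1 < b)%N ->
  (b%:R * Num.sqrt b%:R)^-1 <= 2 / Num.sqrt b.-1%:R - 2 / Num.sqrt b.+1.-1%:R :> R.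
Proof.
case: b => // -[//|n] _; rewrite /= -[n.+2%:R]natr1.
have t_gt0 : 0 < n.+1%:R :> R by [].
move: t_gt0; set t : R := n.+1%:R => t_gt0.
have u_gt0 : 0 < Num.sqrt t by rewrite sqrtr_gt0.
have u_sq : Num.sqrt t ^+ 2 = t by rewrite sqr_sqrtr // ltW.
have v_sq : Num.sqrt (t + 1) ^+ 2 = t + 1 by rewrite sqr_sqrtr //; lra.
have u_le_v : Num.sqrt t <= Num.sqrt (t + 1) by rewrite ler_sqrt; lra.
move: u_gt0 u_sq v_sq u_le_v; set u := Num.sqrt t; set v := Num.sqrt (t + 1).
move=> u_gt0 u_sq v_sq u_le_v; rewrite -v_sq -subr_ge0.
have v_gt0 : 0 < v by lra.
have -> : 2 / u - 2 / v - (v ^+ 2 * v)^-1 =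
          (2 * v ^+ 3 - 2 * u * v ^+ 2 - u) / (u * v ^+ 3).
  by field; rewrite ?gt_eqF.
apply: divr_ge0; last by rewrite mulr_ge0 ?exprn_ge0 ?ltW.
have -> : 2 * v ^+ 3 - 2 * u * v ^+ 2 - u =
          (v - u) ^+ 2 * (2 * v + u) + u * (v ^+ 2 - u ^+ 2 - 1) by ring.
have -> : v ^+ 2 - u ^+ 2 - 1 = 0 by rewrite u_sq v_sq; ring.
by rewrite mulr0 addr0 mulr_ge0 ?sqr_ge0 //; lra.
Qed.

Lemma sum_inv_pow3half_le N : \sum_(1 <= b < N) (b%:R * Num.sqrt b%:R)^-1 <= 3 :> R.
Proof.
have [N_le1|N_gt1] := leqP N 1; first by rewrite big_geq.
rewrite big_ltn // sqrtr1 mulr1 invr1.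
suff : \sum_(2 <= b < N) (b%:R * Num.sqrt b%:R)^-1 <= 2 :> R by lra.
have := @sum_telescope_le (fun b => (b%:R * Num.sqrt b%:R)^-1)
                          (fun b => 2 / Num.sqrt b.-1%:R) 2 N.
rewrite /= sqrtr1 divr1; apply=> [b b_ge2 | b _]; first exact: inv_pow3half_le_telescope.
by rewrite divr_ge0 ?sqrtr_ge0.
Qed.

(* Weight of [(a, b)] in the parametrisation [a ^ 2 * b ^ 3] of square-full numbers. *)
Definition sqr_cube_weight (y : R) (a b : nat) : R :=
  if y ^+ 2 < ((a ^ 2 * b ^ 3)%N)%:R then (((a ^ 2 * b ^ 3)%N)%:R)^-1 else 0.

Lemma sum_sqr_cube_weight_col (y : R) N b : 0 < y -> (0 < b)%N ->
  \sum_(a < N) sqr_cube_weight y a b <= 2 / (y * (b%:R * Num.sqrt b%:R)).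
Proof.
move=> y_gt0 b_gt0; set s := b%:R * Num.sqrt b%:R.
have s_gt0 : 0 < s by rewrite mulr_gt0 ?sqrtr_gt0 ?ltr0n.
have s_sq : s ^+ 2 = b%:R ^+ 3 by rewrite exprMn sqr_sqrtr ?ler0n // -exprSr.
have weight_eq a : sqr_cube_weight y a b =
    if y / s < a%:R then (s ^+ 2)^-1 * (a%:R ^+ 2)^-1 else 0.
  rewrite /sqr_cube_weight natrM !natrX -s_sq -exprMn ltr_pdivrMr //.
  have as_ge0 : 0 <= a%:R * s by rewrite mulr_ge0 ?ler0n ?ltW.
  rewrite ltr_pXn2r ?nnegrE ?(ltW y_gt0) //.
  by case: ifP => // _; rewrite (exprMn_comm _ (mulrC _ _)) invfM mulrC.
rewrite (eq_bigr _ (fun (a : 'I_N) _ => weight_eq a)) -big_mkcond -mulr_sumr /=.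
apply: le_trans (ler_wpM2l _ (sum_inv_sqr_gt N _)) _.
- by rewrite invr_ge0 exprn_ge0 // ltW.
- by rewrite divr_gt0.
have -> : (s ^+ 2)^-1 * (2 / (y / s)) = 2 / (y * s) by field; rewrite !gt_eqF.
exact: lexx.
Qed.

Lemma sum_sqr_cube_weight_le (y : R) N : 0 < y ->
  \sum_(a < N) \sum_(b < N) sqr_cube_weight y a b <= 6 / y.
Proof.
move=> y_gt0; rewrite exchange_big /=.
apply: le_trans (_ : \sum_(b < N | (0 < b)%N)
                       2 / y * (b%:R * Num.sqrt b%:R)^-1 <= _).
  rewrite [X in _ <= X]big_mkcond; apply: ler_sum => b _; case: ifP => [b_gt0|].
    by rewrite -mulrA -invfM; apply: sum_sqr_cube_weight_col.
  rewrite lt0n => /negbFE/eqP b0; rewrite big1 // => a _.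
  by rewrite /sqr_cube_weight b0 muln0 ltNge sqr_ge0.
rewrite -mulr_sumr.
have -> : \sum_(b < N | (0 < b)%N) (b%:R * Num.sqrt b%:R)^-1 =
          \sum_(1 <= b < N) (b%:R * Num.sqrt b%:R)^-1 :> R.
  by rewrite big_geq_mkord; apply: eq_bigl.
have -> : 6 / y = 2 / y * 3 by rewrite mulrAC -natrM.
by rewrite ler_pM2l ?divr_gt0 // sum_inv_pow3half_le.
Qed.
End SquarefullReciprocals.

Lemma exists_factor_gt (R : realFieldType) (I : finType) (f : I -> nat) (K m : nat)
    (V : R) :
  (m <= K * \prod_i f i)%N -> K%:R * V ^+ #|I| < m%:R -> exists i, V < (f i)%:R.
Proof.
move=> m_le K_lt; have [i V_lt | all_le] := pickP (fun i => V < (f i)%:R).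
  by exists i.
have prod_le : (\prod_i f i)%:R <= V ^+ #|I|.
  rewrite natr_prod -prodr_const; apply: ler_prod => i _.
  by rewrite ler0n leNgt all_le.
suff : m%:R <= K%:R * V ^+ #|I| by rewrite leNgt K_lt.
apply: le_trans (_ : (K * \prod_i f i)%N%:R <= _); first by rewrite ler_nat.
by rewrite natrM ler_wpM2l.
Qed.

Lemma exists_neq n (i : 'I_n.+2) : exists j, j != i.
Proof.
exists (if i == ord0 then ord_max else ord0).
by case: (eqVneq i ord0) => [->|]; rewrite // eq_sym.
Qed.

Section CountedPoints.
Variable R : realType.
Variables a b : 'I_4 -> int.
Hypothesis det_neq0 : forall i j : 'I_4, i != j -> a i * b j - a j * b i != 0.
Variables (delta S Rr : R) (i1 : 'I_4).
Hypotheses (S_ge1 : 1 <= S) (Rr_ge1 : 1 <= Rr).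
Variable s : seq (int * int).
Hypothesis s_uniq : uniq s.
Hypothesis s_counted : forall x, x \in s -> counted a b delta S Rr i1 x.

Let M := coef_bound a b.
Let Sn := Num.truncn (2 * S).
Let Rn := Num.truncn (2 * Rr).
Let N := (M * Sn).+1.
Let E := (det_prod a b ^ 4)%N.
Let W := (S * Rr) `^ (delta / 8).
Let y := W / E%:R.

Let E_gt0 : (0 < E)%N.
Proof. by rewrite expn_gt0 det_prod_gt0. Qed.

Let SR_gt0 : 0 < S * Rr.
Proof. by rewrite mulr_gt0 // (lt_le_trans ltr01). Qed.

Let W_gt0 : 0 < W.
Proof. by rewrite powR_gt0 // SR_gt0. Qed.

Let y_gt0 : 0 < y.
Proof. by rewrite divr_gt0 ?W_gt0 ?ltr0n ?E_gt0. Qed.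

Lemma linf_le_counted x k : x \in s -> (`|linf a b k x| <= M * Sn)%N.
Proof.
move=> /s_counted[_ _ /andP[_ supn_lt] _ _].
apply: leq_trans (linf_le a b x k) _; rewrite leq_mul2l.
have two_S_ge0 : 0 <= 2 * S by have := S_ge1; lra.
by rewrite truncn_ge_nat // natr_absz ger0_norm ?supn_ge0 ?ltW ?orbT.
Qed.

Lemma linf_i1_le_counted x : x \in s -> (`|linf a b i1 x| <= Rn)%N.
Proof.
move=> /s_counted[_ _ _ /andP[_ L_lt] _].
have two_Rr_ge0 : 0 <= 2 * Rr by have := Rr_ge1; lra.
by rewrite truncn_ge_nat // natr_absz ltW.
Qed.

Lemma counted_sqfull_factor_gt x : x \in s ->
  exists i, y ^+ 2 < (sqfull_part `|linf a b i x|)%:R.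
Proof.
move=> /s_counted[x_prim x_nz _ _ Delta_gt].
apply: exists_factor_gt (Delta_bad_le det_neq0 x_prim x_nz) _.
apply: le_lt_trans Delta_gt; rewrite card_ord.
have E_ge1 : 1 <= E%:R :> R by rewrite ler1n E_gt0.
have -> : (S * Rr) `^ delta = W ^+ 8.
  rewrite /W -powR_mulrn ?powR_ge0 // -powRrM mulrAC -mulrA divff ?mulr1 //.
  by rewrite pnatr_eq0.
have -> : (det_prod a b ^ 8)%N = (E ^ 2)%N by rewrite -expnM.
have -> : (E ^ 2)%:R * (y ^+ 2) ^+ 4 = W ^+ 8 / E%:R ^+ 6.
  by rewrite natrX /y; field; rewrite pnatr_eq0 -lt0n E_gt0.
rewrite ler_pdivrMr ?exprn_gt0 ?ltr0n ?E_gt0 // ler_peMr ?exprn_ege1 //.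
by rewrite exprn_ge0 // ltW ?W_gt0.
Qed.

Let sqr_cube_pattern (t : 'I_4 * ('I_N * 'I_N)) (x : int * int) : bool :=
  (y ^+ 2 < ((t.2.1 ^ 2 * t.2.2 ^ 3)%N)%:R) &&
  (((t.2.1 ^ 2 * t.2.2 ^ 3)%N)%:Z %| linf a b t.1 x)%Z.

Lemma counted_sqr_cube_pattern x : x \in s -> exists t, sqr_cube_pattern t x.
Proof.
move=> xs; have [i sq_gt] := counted_sqfull_factor_gt xs.
have [al [be [al_gt0 be_gt0 sq_eq]]] := sqfull_part_sqr_cube `|linf a b i x|.
have [_ x_nz _ _ _] := s_counted xs.
have L_gt0 : (0 < `|linf a b i x|)%N by rewrite absz_gt0 linf_neq0.
have d_le : (al ^ 2 * be ^ 3 <= M * Sn)%N.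
  rewrite -sq_eq; apply: leq_trans (linf_le_counted i xs).
  exact: dvdn_leq L_gt0 (sqfull_part_dvdn L_gt0).
have al_lt : (al < N)%N.
  rewrite ltnS (leq_trans _ d_le) // expnS -mulnA leq_pmulr //.
  by rewrite muln_gt0 !expn_gt0 al_gt0 be_gt0.
have be_lt : (be < N)%N.
  rewrite ltnS (leq_trans _ d_le) // (expnS be) mulnCA leq_pmulr //.
  by rewrite muln_gt0 !expn_gt0 al_gt0 be_gt0.
exists (i, (Ordinal al_lt, Ordinal be_lt)); rewrite /sqr_cube_pattern /= -sq_eq sq_gt.
by rewrite dvdzE absz_nat sqfull_part_dvdn.
Qed.

Lemma count_dvd_linf_le i d : (0 < d)%N ->
  (count (fun x => (d%:Z %| linf a b i x)%Z) s * d <= 9 * (M * Sn) * Rn)%N.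
Proof.
move=> d_gt0; rewrite -size_filter.
have Rn_gt0 : (0 < Rn)%N by rewrite truncn_gt0; have := Rr_ge1; lra.
have Sn_gt0 : (0 < Sn)%N by rewrite truncn_gt0; have := S_ge1; lra.
have MSn_gt0 : (0 < M * Sn)%N by rewrite muln_gt0 Sn_gt0 andbT.
have [-> | i_neq] := eqVneq i i1.
  have [j j_neq] := exists_neq i1.
  rewrite mulnAC; apply: (size_filter_dvdz_le (g := linf a b j)) => // [|x xs].
    by move=> x z _ _; apply: linf_pair_inj; rewrite // eq_sym.
  have [_ x_nz _ _ _] := s_counted xs.
  by rewrite linf_i1_le_counted ?linf_le_counted ?linf_neq0.
apply: (size_filter_dvdz_le (g := linf a b i1)) => // [|x xs].
  by move=> x z _ _; apply: linf_pair_inj.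
have [_ x_nz _ _ _] := s_counted xs.
by rewrite linf_i1_le_counted ?linf_le_counted ?linf_neq0.
Qed.

Lemma count_sqr_cube_pattern_le t :
  (count (sqr_cube_pattern t) s)%:R <=
    36 * M%:R * (S * Rr) * sqr_cube_weight y t.2.1 t.2.2.
Proof.
case: t => i [al be]; rewrite /sqr_cube_weight /=; set d := (al ^ 2 * be ^ 3)%N.
have [d_gt | d_le] := ltP (y ^+ 2) d%:R; last first.
  rewrite mulr0 (@eq_count _ _ pred0) ?count_pred0 // => x.
  by rewrite /sqr_cube_pattern /= ltNge d_le.
have d_gt0 : (0 < d)%N by rewrite -(ltr0n R) (le_lt_trans (sqr_ge0 y)).
rewrite (@eq_count _ _ (fun x => (d%:Z %| linf a b i x)%Z)); last first.
  by move=> x; rewrite /sqr_cube_pattern /= d_gt.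
rewrite ler_pdivlMr ?ltr0n // -[X in X <= _]natrM.
apply: le_trans (_ : (9 * (M * Sn) * Rn)%N%:R <= _).
  by rewrite ler_nat count_dvd_linf_le.
have Sn_le : Sn%:R <= 2 * S by rewrite truncn_le; have := S_ge1; lra.
have Rn_le : Rn%:R <= 2 * Rr by rewrite truncn_le; have := Rr_ge1; lra.
have -> : 36 * M%:R * (S * Rr) = 9 * (M%:R * ((2 * S) * (2 * Rr))) by ring.
rewrite !natrM -mulrA -mulrA ler_wpM2l // ler_wpM2l ?ler0n //.
exact: ler_pM (ler0n _ _) (ler0n _ _) Sn_le Rn_le.
Qed.

Lemma size_counted_le :
  (size s)%:R <= 864 * M%:R * E%:R * (S * Rr) `^ (1 - delta / 8).
Proof.
set c := 36 * M%:R * (S * Rr).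
have c_ge0 : 0 <= c by rewrite mulr_ge0 ?(ltW SR_gt0) // mulr_ge0 ?ler0n.
have size_le :
    (size s)%:R <= \sum_(t : 'I_4 * ('I_N * 'I_N)) c * sqr_cube_weight y t.2.1 t.2.2.
  apply: le_trans (_ : (\sum_t count (sqr_cube_pattern t) s)%N%:R <= _).
    by rewrite ler_nat size_le_sum_count //; apply: counted_sqr_cube_pattern.
  by rewrite natr_sum; apply: ler_sum => t _; apply: count_sqr_cube_pattern_le.
apply: le_trans size_le _.
rewrite -mulr_sumr.
rewrite -(pair_bigA _ (fun (i : 'I_4) (q : 'I_N * 'I_N) => sqr_cube_weight y q.1 q.2)).
rewrite sumr_const card_ord -(pair_bigA _ (fun (a b : 'I_N) => sqr_cube_weight y a b)).
apply: le_trans (_ : c * (6 / y *+ 4) <= _).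
  by rewrite ler_wpM2l // lerMn2r sum_sqr_cube_weight_le ?y_gt0.
have -> : (S * Rr) `^ (1 - delta / 8) = S * Rr / W.
  by rewrite powRB ?powRr1 ?(ltW SR_gt0) // (gt_eqF SR_gt0) implybT.
rewrite [X in X <= _](_ : _ = 864 * M%:R * E%:R * (S * Rr / W)) //.
rewrite /c /y -mulr_natr; field.
by rewrite (gt_eqF W_gt0) pnatr_eq0 -lt0n E_gt0.
Qed.
End CountedPoints.

Theorem lemma5p9 (R : realType) (a b : 'I_4 -> int)
  (Hcop : forall i : 'I_4, gcdz (a i) (b i) = 1%N)
  (Hnp : forall i j : 'I_4, i != j -> a i * b j - a j * b i != 0) :
  exists C : R, 0 < C /\
    forall (delta S Rr : R) (i1 : 'I_4),
      0 <= delta -> 1 <= S -> 1 <= Rr ->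
      forall s : seq (int * int), uniq s ->
        (forall x, x \in s -> counted a b delta S Rr i1 x) ->
        (size s)%:R <= C * (S * Rr) `^ (1 - delta / 8).
Proof.
exists (864 * (coef_bound a b)%:R * (det_prod a b ^ 4)%N%:R); split.
  by rewrite !mulr_gt0 ?ltr0n ?expn_gt0 ?det_prod_gt0.
move=> delta S Rr i1 _ S_ge1 Rr_ge1 s s_uniq s_counted.
exact: (size_counted_le Hnp S_ge1 Rr_ge1 s_uniq s_counted).
Qed.
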